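(* Let $\mathbf{k}$ be a commutative ring and $H$ a commutative connected graded $\mathbf{k}$-Hopf algebra. Let $\beta_H:H\to H\otimes\mathrm{QSym}_{\mathbf{k}}$ be defined by $\beta_H(h)=\sum_{\alpha\in\mathrm{Comp}}\xi_\alpha(h)\otimes M_\alpha$. (a) $\beta_H$ is a $\mathbf{k}$-algebra homomorphism and a graded $(\mathbf{k},H)$-coalgebra homomorphism. (b) $(\mathrm{id}_H\otimes\varepsilon_P)\circ\beta_H=\mathrm{id}_H$ (identifying $H\otimes\mathbf{k}$ with $H$). (c) $(\beta_H\otimes\mathrm{id}_{\mathrm{QSym}_{\mathbf{k}}})\circ\beta_H=(\mathrm{id}_H\otimes\Delta'_P)\circ\beta_H$ as maps $H\to H\otimes\mathrm{QSym}_{\mathbf{k}}\otimes\mathrm{QSym}_{\mathbf{k}}$. (d) If the $\mathbf{k}$-coalgebra $H$ is cocommutative, then $\beta_H(H)\subseteq H\otimes\Lambda_{\mathbf{k}}$, where $\Lambda_{\mathbf{k}}\subseteq\mathrm{QSym}_{\mathbf{k}}$ is the algebra of symmetric functions.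
   Context: Unadorned tensor products are over $\mathbf{k}$; graded means $\mathbb{N}$-graded, connected means $H_0\cong\mathbf{k}$ via the counit. A composition is a finite sequence of positive integers; $\mathrm{Comp}$ the set of compositions. $\mathrm{QSym}_{\mathbf{k}}\subseteq\mathbf{k}[[x_1,x_2,\ldots]]$ is the Hopf algebra of quasisymmetric functions with monomial basis $M_\alpha=\sum_{1\le i_1<\cdots<i_\ell}x_{i_1}^{\alpha_1}\cdots x_{i_\ell}^{\alpha_\ell}$ (for $\alpha=(\alpha_1,\ldots,\alpha_\ell)$, degree $\alpha_1+\cdots+\alpha_\ell$), with $\Delta(M_{(b_1,\ldots,b_\ell)})=\sum_{i=0}^\ell M_{(b_1,\ldots,b_i)}\otimes M_{(b_{i+1},\ldots,b_\ell)}$; $\varepsilon_P:\mathrm{QSym}_{\mathbf{k}}\to\mathbf{k}$, $f\mapsto f(1,0,0,\ldots)$. For $\alpha=(a_1,\ldots,a_k)$, $\xi_\alpha=m^{(k-1)}\circ\pi_\alpha\circ\Delta^{(k-1)}:H\to H$, where $\Delta^{(k-1)}:H\to H^{\otimes k}$ is the iterated comultiplication ($\Delta^{(-1)}=\varepsilon$, $\Delta^{(0)}=\mathrm{id}$, $\Delta^{(k)}=(\mathrm{id}\otimes\Delta^{(k-1)})\circ\Delta$), $m^{(k-1)}:H^{\otimes k}\to H$ is $h_1\otimes\cdots\otimes h_k\mapsto h_1\cdots h_k$ ($m^{(-1)}$ the unit), and $\pi_\alpha=\pi_{a_1}\otimes\cdots\otimes\pi_{a_k}$ with $\pi_n:H\to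 H$ the projection onto $H_n$. The sum defining $\beta_H(h)$ is finite. Second comultiplication: for $A=(a_{i,j})\in\mathbb{N}^{u\times v}$, $\mathrm{column}\,A$ is the $v$-tuple of column sums, $\mathrm{row}\,A$ the $u$-tuple of row sums, $\mathrm{read}\,A=(a_{1,1},\ldots,a_{1,v},\ldots,a_{u,1},\ldots,a_{u,v})$; $A$ is reduced if no row and no column is zero; $\mathbb{N}^{\bullet,\bullet}_{\mathrm{red}}$ is the set of all reduced matrices of all sizes; $w^{\mathrm{red}}$ is $w$ with zero entries removed. $\Delta_P$ is the $\mathbf{k}$-linear map $M_\gamma\mapsto\sum_{A\in\mathbb{N}^{\bullet,\bullet}_{\mathrm{red}},(\mathrm{read}\,A)^{\mathrm{red}}=\gamma}M_{\mathrm{row}\,A}\otimes M_{\mathrm{column}\,A}$, and $\Delta'_P=\tau\circ\Delta_P$ with $\tau$ the twist $x\otimes y\mapsto y\otimes x$. Extension of scalars: $H\otimes\mathrm{QSym}_{\mathbf{k}}$ is regarded as an $H$-module via $a(b\otimes q)=ab\otimes q$, an $H$-algebra, and an $H$-coalgebra with comultiplication $\mathrm{id}_H\otimes\Delta$ (identifying $H\otimes(Q\otimes Q)\cong(H\otimes Q)\otimes_H(H\otimes Q)$) and counit $\mathrm{id}_H\otimes\varepsilon$, graded by $(H\otimes\mathrm{QSym}_{\mathbf{k}})_n=H\otimes(\mathrm{QSym}_{\mathbf{k}})_n$ (the grading and coalgebra structure of the left factor $H$ are ignored). Also $H\otimes H$ (scalars extended to the left factor) is an $H$-coalgebra in the same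 way. A $\mathbf{k}$-linear $f:H\to G$ into an $H$-coalgebra $G$ is a $(\mathbf{k},H)$-coalgebra homomorphism if $f^\sharp:H\otimes H\to G$, $a\otimes h\mapsto af(h)$, is an $H$-coalgebra homomorphism; graded means $\beta_H(H_n)\subseteq H\otimes(\mathrm{QSym}_{\mathbf{k}})_n$. *)

From HB Require Import structures.
From mathcomp Require Import all_boot all_order all_algebra.

Set Implicit Arguments.
Unset Strict Implicit.
Unset Printing Implicit Defensive.

Import GRing.Theory.
Local Open Scope ring_scope.

(* An element of H (x) H is represented by a formal sum  sum_i a_i (x) b_i,  *)
(* i.e. a list of pairs; two formal sums are equal in H (x) H iff every      *)
(* k-bilinear map out of H x H (into any k-module) takes the same value on   *)
(* them (universal property of the tensor product).  Same for three factors.*)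
Section Tensors.
Variables (k : comPzRingType) (H : comAlgType k).

Definition bilinear2 (M : lmodType k) (f : H -> H -> M) : Prop :=
  forall (a : k) (x y z : H),
    f (a *: x + y) z = a *: f x z + f y z /\ f z (a *: x + y) = a *: f z x + f z y.

Definition trilinear3 (M : lmodType k) (f : H -> H -> H -> M) : Prop :=
  forall (a : k) (x y z w : H),
    [/\ f (a *: x + y) z w = a *: f x z w + f y z w,
        f z (a *: x + y) w = a *: f z x w + f z y w &
        f z w (a *: x + y) = a *: f z w x + f z w y].

Definition teq2 (s t : seq (H * H)) : Prop :=
  forall (M : lmodType k) (f : H -> H -> M), bilinear2 f ->
    \sum_(p <- s) f p.1 p.2 = \sum_(p <- t) f p.1 p.2.

Definition teq3 (s t : seq (H * H * H)) : Prop :=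
  forall (M : lmodType k) (f : H -> H -> H -> M), trilinear3 f ->
    \sum_(p <- s) f p.1.1 p.1.2 p.2 = \sum_(p <- t) f p.1.1 p.1.2 p.2.

Definition tscale (a : k) (s : seq (H * H)) := [seq (a *: p.1, p.2) | p <- s].
Definition tmul (s t : seq (H * H)) := [seq (p.1 * q.1, p.2 * q.2) | p <- s, q <- t].
Definition tswap (s : seq (H * H)) := [seq (p.2, p.1) | p <- s].

End Tensors.

(*  pi n : the projection H -> H onto the n-th graded piece H_n              *)
(*         (H = (+)_n H_n, with H_n = image of pi n).                        *)
Section Hopf.
Variables (k : comPzRingType) (H : comAlgType k).
Variables (D : H -> seq (H * H)) (eps : H -> k) (S : H -> H) (pi : nat -> H -> H).

Definition in_deg (n : nat) (x : H) : Prop := pi n x = x.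

Record graded_connected_Hopf : Prop := {
  pi_lin : forall n (a : k) x y, pi n (a *: x + y) = a *: pi n x + pi n y;
  pi_orth : forall n m x, pi n (pi m x) = if n == m then pi m x else 0;
  pi_decomp : forall x, exists N : nat,
      (forall n, (N <= n)%N -> pi n x = 0) /\ x = \sum_(n < N) pi n x;
  mul_graded : forall n m x y, in_deg n x -> in_deg m y -> in_deg (n + m) (x * y);
  one_graded : in_deg 0 1;
  D_lin : forall (a : k) x y, teq2 (D (a *: x + y)) (tscale a (D x) ++ D y);
  D_coassoc : forall x,
      teq3 [seq (q.1, q.2, p.2) | p <- D x, q <- D p.1]
           [seq (p.1, q.1, q.2) | p <- D x, q <- D p.2];
  eps_lin : forall (a : k) x y, eps (a *: x + y) = a * eps x + eps y;
  counit_l : forall x, \sum_(p <- D x) eps p.1 *: p.2 = x;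
  counit_r : forall x, \sum_(p <- D x) eps p.2 *: p.1 = x;
  D_mul : forall x y, teq2 (D (x * y)) (tmul (D x) (D y));
  D_one : teq2 (D 1) [:: (1, 1)];
  eps_mul : forall x y, eps (x * y) = eps x * eps y;
  eps_one : eps 1 = 1;
  D_graded : forall n x, in_deg n x ->
      teq2 (D x) [seq (pi i p.1, pi (n - i) p.2) | i <- iota 0 n.+1, p <- D x];
  eps_graded : forall n x, (0 < n)%N -> in_deg n x -> eps x = 0;
  connected_inj : forall x y, in_deg 0 x -> in_deg 0 y -> eps x = eps y -> x = y;
  connected_surj : forall c : k, exists x, in_deg 0 x /\ eps x = c;
  S_lin : forall (a : k) x y, S (a *: x + y) = a *: S x + S y;
  antipode_l : forall x, \sum_(p <- D x) S p.1 * p.2 = eps x *: 1;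
  antipode_r : forall x, \sum_(p <- D x) p.1 * S p.2 = eps x *: 1
}.

Definition cocommutative : Prop := forall x, teq2 (D x) (tswap (D x)).

(* iterated comultiplication Delta^(n) : H -> H^(x)(n+1), as formal sums of *)
(* lists of length n+1;  Delta^(0) = id, Delta^(n+1) = (id (x) Delta^(n)) o Delta *)
Fixpoint Dit (n : nat) (h : H) : seq (seq H) :=
  if n is n'.+1 then [seq p.1 :: t | p <- D h, t <- Dit n' p.2] else [:: [:: h]].

Definition xi (alpha : seq nat) (h : H) : H :=
  if alpha is _ :: _ then
    \sum_(t <- Dit (size alpha).-1 h) \prod_(i < size alpha) pi (nth 0%N alpha i) (nth 0 t i)
  else eps h *: 1.

End Hopf.

Definition is_comp (a : seq nat) : bool := all (fun x => 0 < x)%N a.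

Definition red (w : seq nat) : seq nat := [seq x <- w | x != 0%N].

Fixpoint boxes (g : seq nat) : seq (seq nat) :=
  if g is x :: g' then [seq y :: t | y <- iota 0 x.+1, t <- boxes g'] else [:: [::]].

Definition subn_seq (g e : seq nat) : seq nat := [seq (p.1 - p.2)%N | p <- zip g e].

(* matrices (as lists of rows) with length g rows, v columns, row i having *)
(* entries <= g_i                                                           *)
Definition mats (g : seq nat) (v : nat) : seq (seq (seq nat)) :=
  foldr (fun x acc => [seq r :: t | r <- boxes (nseq v x), t <- acc]) [:: [::]] g.

Definition rowsums (A : seq (seq nat)) : seq nat := map sumn A.
Definition colsums (A : seq (seq nat)) (v : nat) : seq nat :=
  [seq sumn [seq nth 0%N r j | r <- A] | j <- iota 0 v].
Definition readm (A : seq (seq nat)) : seq nat := flatten A.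
Definition reduced (A : seq (seq nat)) (v : nat) : bool :=
  all (fun x => 0 < x)%N (rowsums A) && all (fun x => 0 < x)%N (colsums A v).

(* H (x) QSym_k.  Since (M_alpha) is a basis of QSym_k, an element of        *)
(* H (x) QSym_k is  sum_alpha f(alpha) (x) M_alpha  with f : Comp -> H of    *)
(* finite support; we represent it by its coefficient function f.           *)
(* Likewise H (x) QSym (x) QSym by coefficient functions of M_a (x) M_b.     *)
Section HQ.
Variables (k : comPzRingType) (H : comAlgType k).

Definition HQ := seq nat -> H.
Definition HQQ := seq nat -> seq nat -> H.

Definition HQ_supp (f : HQ) (s : seq (seq nat)) : Prop :=
  forall alpha, is_comp alpha -> f alpha != 0 -> alpha \in s.

(* product of H (x) QSym: the coefficient of M_gamma in a quasisymmetric   *)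
(* function is the coefficient of x_1^gamma_1 ... x_l^gamma_l, and the      *)
(* coefficient of x^e in M_alpha is 1 if e^red = alpha, 0 otherwise.        *)
Definition HQ_mul (f g : HQ) : HQ :=
  fun gamma => \sum_(e <- boxes gamma) f (red e) * g (red (subn_seq gamma e)).
Definition HQ_one : HQ := fun gamma => if gamma == [::] then 1 else 0.

(* comultiplication id_H (x) Delta : Delta(M_gamma) = sum over splittings  *)
Definition HQ_Delta (f : HQ) : HQQ := fun a b => f (a ++ b).
(* counit id_H (x) eps : eps(M_alpha) = [alpha = empty] *)
Definition HQ_eps (f : HQ) : H := f [::].

(* eps_P(M_alpha) = M_alpha(1,0,0,...) *)
Definition epsP_M (alpha : seq nat) : k := if (size alpha <= 1)%N then 1 else 0.

(* id_H (x) Delta'_P, Delta'_P = tau o Delta_P: coefficient of             *)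
(* M_a (x) M_c  in  sum_delta f(delta) Delta'_P(M_delta) is the sum of     *)
(* f((read A)^red) over reduced A with column A = a and row A = c.          *)
Definition HQ_DeltaP' (f : HQ) : HQQ := fun a c =>
  \sum_(A <- mats c (size a) |
        [&& rowsums A == c, colsums A (size a) == a & reduced A (size a)])
     f (red (readm A)).

(* H (x) Lambda_k inside H (x) QSym_k : elements sum_lambda g(lambda) (x) m_lambda, *)
(* m_lambda = sum_{alpha rearrangement of lambda} M_alpha the monomial symmetric  *)
(* functions (which span Lambda_k).                                           *)
Definition in_HLambda (f : HQ) : Prop :=
  exists g : seq nat -> H, forall alpha, is_comp alpha -> f alpha = g (sort geq alpha).

(* for a map beta : H -> H (x) QSym:  beta^sharp : H (x) H -> H (x) QSym,  *)
(* a (x) h |-> a beta(h)  *)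
Definition fsharp (beta : H -> HQ) (s : seq (H * H)) : HQ :=
  fun a => \sum_(p <- s) p.1 * beta p.2 a.
(* beta^sharp (x)_H beta^sharp :                                           *)
(* (H(x)H)(x)_H(H(x)H) = H(x)H(x)H -> (H(x)Q)(x)_H(H(x)Q) = H(x)Q(x)Q      *)
Definition fsharp2 (beta : H -> HQ) (t : seq (H * H * H)) : HQQ :=
  fun a b => \sum_(r <- t) r.1.1 * beta r.1.2 a * beta r.2 b.

End HQ.

Definition DeltaHH (k : comPzRingType) (H : comAlgType k) (D : H -> seq (H * H))
  (s : seq (H * H)) : seq (H * H * H) :=
  [seq (p.1, q.1, q.2) | p <- s, q <- D p.2].

Definition betaH (k : comPzRingType) (H : comAlgType k) (D : H -> seq (H * H))
  (eps : H -> k) (pi : nat -> H -> H) (h : H) : HQ H :=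
  fun alpha => if is_comp alpha then xi D eps pi alpha h else 0.

(* The map [xi_alpha] is the convolution product [pi_a1 * ... * pi_ak] of the
   graded projections in the convolution algebra [End(H)] ([conv_pi], [xiE]),
   whose unit [u o eps] equals [pi_0] by connectedness.  Hence [beta_H] is
   linear; it is comultiplicative since [xi_(alpha beta) = xi_alpha * xi_beta]
   by associativity of convolution; it is multiplicative since [Delta] is an
   algebra map and [pi_n (x y) = sum_i pi_i x * pi_(n-i) y]; and
   [sum_n pi_n = id] gives (b).  For (c), expanding [xi_alpha (xi_gamma h)]
   by multiplicativity yields a sum over the matrices with row sums [gamma]
   and column sums [alpha], whose zero entries may be dropped because [pi_0]
   is the convolution unit.  For (d), cocommutativity makes convolution
   commutative, so [xi_alpha] only depends on the multiset of parts of
   [alpha]. *)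

From HB Require Import structures.
From mathcomp Require Import all_boot all_order all_algebra.
From Stdlib Require Import FunctionalExtensionality.

Set Implicit Arguments.
Unset Strict Implicit.
Unset Printing Implicit Defensive.

Import GRing.Theory.

Lemma all2_nth (S T : Type) (x0 : S) (y0 : T) (r : S -> T -> bool) s t :
  size s = size t ->
  all2 r s t = all (fun j => r (nth x0 s j) (nth y0 t j)) (iota 0 (size s)).
Proof.
elim: s t => [|x s IH] [|y t] //= [hst].
by rewrite (IH t hst) -[1]/(1 + 0) iotaDl all_map.
Qed.

Lemma eq_map_iota (f : nat -> nat) (a : seq nat) v : size a = v ->
  (map f (iota 0 v) == a) = all (fun j => f j == nth 0 a j) (iota 0 v).
Proof.
move=> ha; apply/eqP/allP => [<- j|h].
  by rewrite mem_iota add0n => /andP[_ hj]; rewrite (nth_map 0) ?size_iota // nth_iota.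
apply: (@eq_from_nth _ 0); rewrite size_map size_iota // => j hj.
by rewrite (nth_map 0) ?size_iota // nth_iota //; apply/eqP/h; rewrite mem_iota add0n.
Qed.

Lemma size_subn_seq a r : size r = size a -> size (subn_seq a r) = size a.
Proof. by move=> h; rewrite size_map size_zip h minnn. Qed.

Lemma nth_subn_seq a r j : size r = size a ->
  nth 0 (subn_seq a r) j = nth 0 a j - nth 0 r j.
Proof.
move=> h; case: (ltnP j (size a)) => hj.
  by rewrite (nth_map (0, 0)) ?size_zip ?h ?minnn // nth_zip.
by rewrite !nth_default ?size_subn_seq // h.
Qed.

Lemma leq_nth_sumn r j : nth 0 r j <= sumn r.
Proof.
elim: r j => [|x r IH] [|j] //=; first exact: leq_addr.
exact: leq_trans (IH j) (leq_addl _ _).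
Qed.

Lemma eqn_addl_sub x y z : (x + y == z) = (x <= z) && (y == z - x).
Proof.
apply/eqP/andP => [<-|[hxz /eqP ->]]; last by rewrite subnKC.
by rewrite leq_addr addKn.
Qed.

Lemma boxes_cons x g : boxes (x :: g) = [seq y :: t | y <- iota 0 x.+1, t <- boxes g].
Proof. by []. Qed.

Lemma mem_boxes g r : (r \in boxes g) = all2 leq r g.
Proof.
elim: g r => [|a g IH] [|x r] //; rewrite boxes_cons.
  by apply/allpairsP => -[[y t] [_ _]].
rewrite [all2 _ _ _]/=; apply/allpairsP/andP => [[[y t] [hy ht [-> ->]]]|[hx hr]].
  by rewrite -IH ht; move: hy; rewrite mem_iota add0n ltnS.
by exists (x, r); rewrite mem_iota add0n ltnS IH.
Qed.

Lemma size_mem_boxes g r : r \in boxes g -> size r = size g.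
Proof. by rewrite mem_boxes all2E => /andP[/eqP]. Qed.

Lemma boxes_uniq g : uniq (boxes g).
Proof.
elim: g => [|a g IH] //; rewrite boxes_cons; apply: allpairs_uniq => //; first exact: iota_uniq.
by move=> [x r] [y s] _ _ /= [-> ->].
Qed.

Lemma colsums_cons r t a : size r = size a ->
  (colsums (r :: t) (size a) == a) =
    all2 leq r a && (colsums t (size a) == subn_seq a r).
Proof.
move=> hr; rewrite /colsums (eq_map_iota _ (erefl _)) (eq_map_iota _ (size_subn_seq hr)).
rewrite (all2_nth 0 0) // hr -all_predI; apply: eq_in_all => j _ /=.
by rewrite eqn_addl_sub nth_subn_seq.
Qed.

Lemma colsums_nil (a : seq nat) : (colsums [::] (size a) == a) = (sumn a == 0).
Proof.
rewrite /colsums /=.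
suff E m : (map (fun _ => 0) (iota m (size a)) == a) = (sumn a == 0) by apply: E.
elim: a m => [|x a IH] //= m.
by rewrite eqseq_cons IH addn_eq0 eq_sym.
Qed.

Lemma big_mats_cons (R : nmodType) (F : seq (seq nat) -> R) c0 c a :
  (\sum_(A <- mats (c0 :: c) (size a) |
          (rowsums A == c0 :: c) && (colsums A (size a) == a)) F A =
   \sum_(r <- boxes a | sumn r == c0)
     \sum_(t <- mats c (size a) |
             (rowsums t == c) && (colsums t (size a) == subn_seq a r)) F (r :: t))%R.
Proof.
set v := size a.
pose G r := (\sum_(t <- mats c v | (rowsums t == c) && (colsums t v == subn_seq a r)) F (r :: t))%R.
rewrite big_mkcond [mats _ _]/= big_allpairs_dep /=.
transitivity (\sum_(r <- boxes (nseq v c0) | (sumn r == c0) && all2 leq r a) G r)%R.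
  rewrite [RHS]big_mkcond; apply: eq_big_seq => r /size_mem_boxes; rewrite size_nseq => hr.
  rewrite /G [in RHS]big_mkcond; case: ifP => hP.
    by apply: eq_bigr => t _; rewrite eqseq_cons colsums_cons // andbACA hP.
  by apply: big1 => t _; rewrite eqseq_cons colsums_cons // andbACA hP.
rewrite -[LHS]big_filter -[RHS]big_filter; apply: perm_big.
apply: uniq_perm; rewrite ?filter_uniq ?boxes_uniq // => r.
rewrite !mem_filter !mem_boxes; case: eqP => //= hs.
case hra: (all2 leq r a) => //=.
have hr : size r = v by rewrite all2E in hra; case/andP: hra => /eqP.
rewrite (all2_nth 0 0) ?size_nseq //; apply/allP => j; rewrite mem_iota hr => /andP[_ hj].
by rewrite nth_nseq hj -hs leq_nth_sumn.
Qed.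

Lemma is_comp_red e : is_comp (red e).
Proof. by rewrite /is_comp all_filter; apply/allP => x _ /=; rewrite lt0n implybb. Qed.

Lemma is_comp_sumn_eq0 a : is_comp a -> (sumn a == 0) = (a == [::]).
Proof. by case: a => [|x a] //= /andP[hx _]; rewrite addn_eq0 eqn0Ngt hx. Qed.

Fixpoint bounded_seqs (m N : nat) : seq (seq nat) :=
  if m is m'.+1 then [::] :: [seq x :: t | x <- iota 0 N, t <- bounded_seqs m' N]
  else [:: [::]].

Lemma mem_bounded_seqs a m N :
  size a <= m -> all (fun x => x < N) a -> a \in bounded_seqs m N.
Proof.
elim: a m => [|x a IH] [|m] //= hs /andP[hx ha].
by rewrite in_cons /=; apply/allpairsP; exists (x, a); rewrite mem_iota IH.
Qed.

Lemma comp_mem_bounded_seqs a N :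
  is_comp a -> sumn a < N -> a \in bounded_seqs N N.
Proof.
move=> hc hs; apply: mem_bounded_seqs.
  apply: leq_trans (ltnW hs); elim: a hc {hs} => [|x a IH] //= /andP[hx ha].
  by rewrite -add1n leq_add // IH.
apply/allP => x /(nthP 0) [i _ <-]; exact: leq_ltn_trans (leq_nth_sumn a i) hs.
Qed.

Local Open Scope ring_scope.

Lemma exchange_big2 (R : nmodType) (I J K L : Type)
    (r : seq I) (s : seq J) (u : seq K) (v : seq L) (F : I -> J -> K -> L -> R) :
  \sum_(i <- r) \sum_(j <- s) \sum_(x <- u) \sum_(y <- v) F i j x y =
  \sum_(x <- u) \sum_(y <- v) \sum_(i <- r) \sum_(j <- s) F i j x y.
Proof.
transitivity (\sum_(i <- r) \sum_(x <- u) \sum_(j <- s) \sum_(y <- v) F i j x y).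
  by apply: eq_bigr => i _; exact: exchange_big.
rewrite exchange_big; apply: eq_bigr => x _.
by rewrite [RHS]exchange_big; apply: eq_bigr => i _; exact: exchange_big.
Qed.

Section LinearFunctions.
Variables (R : pzRingType) (U : lmodType R) (V : zmodType).
Variables (s : GRing.Scale.law R V) (f : U -> V).
Hypothesis f_lin : linear_for s f.

Let fL : {linear U -> V | s} := HB.pack f (GRing.isLinear.Build R U V s f f_lin).

Lemma linZ a x : f (a *: x) = s a (f x). Proof. exact: (linearZ_LR fL). Qed.
Lemma lin_sum I (r : seq I) (P : pred I) (E : I -> U) :
  f (\sum_(i <- r | P i) E i) = \sum_(i <- r | P i) f (E i).
Proof. exact: (linear_sum fL). Qed.

End LinearFunctions.

Section ConvolutionAlgebra.
Variables (k : comPzRingType) (H : comAlgType k).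
Variables (D : H -> seq (H * H)) (eps : H -> k) (S : H -> H) (pi : nat -> H -> H).
Hypothesis hH : graded_connected_Hopf D eps S pi.

Definition conv (f g : H -> H) : H -> H := fun h => \sum_(p <- D h) f p.1 * g p.2.

Definition conv1 : H -> H := fun h => eps h *: 1.

Lemma eps_scalar : scalar eps.
Proof. exact: eps_lin hH. Qed.

Lemma bilinear2_mul (f g : H -> H) :
  linear f -> linear g -> bilinear2 (fun x y : H => f x * g y).
Proof. by move=> hf hg a x y z; rewrite hf hg mulrDl mulrDr -scalerAl -scalerAr. Qed.

Lemma teq2_sum_mul (f g : H -> H) s t : linear f -> linear g -> teq2 s t ->
  \sum_(p <- s) f p.1 * g p.2 = \sum_(p <- t) f p.1 * g p.2.
Proof. by move=> hf hg st; apply: (st H (fun x y => f x * g y)); apply: bilinear2_mul. Qed.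

Lemma conv_linear (f g : H -> H) : linear f -> linear g -> linear (conv f g).
Proof.
move=> hf hg a x y; rewrite /conv (teq2_sum_mul hf hg (D_lin hH a x y)).
rewrite big_cat big_map scaler_sumr; congr (_ + _).
by apply: eq_bigr => p _ /=; rewrite (linZ hf) scalerAl.
Qed.

Lemma conv1_linear : linear conv1.
Proof. by move=> a x y; rewrite /conv1 (eps_lin hH) scalerDl scalerA. Qed.

Lemma conv1f (g : H -> H) : linear g -> conv conv1 g = g.
Proof.
move=> hg; apply: functional_extensionality => x.
rewrite /conv /conv1 -{2}(counit_l hH x) (lin_sum hg).
by apply: eq_bigr => p _; rewrite (linZ hg) -scalerAl mul1r.
Qed.

Lemma convf1 (f : H -> H) : linear f -> conv f conv1 = f.
Proof.
move=> hf; apply: functional_extensionality => x.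
rewrite /conv /conv1 -{2}(counit_r hH x) (lin_sum hf).
by apply: eq_bigr => p _; rewrite (linZ hf) -scalerAr mulr1.
Qed.

Lemma convA (f g h : H -> H) : linear f -> linear g -> linear h ->
  conv (conv f g) h = conv f (conv g h).
Proof.
move=> hf hg hh; apply: functional_extensionality => x.
have tri : trilinear3 (fun a b c : H => f a * g b * h c).
  by move=> a y z w v; rewrite hf hg hh !(mulrDl, mulrDr) -!(scalerAl, scalerAr).
have := D_coassoc hH x tri; rewrite !big_allpairs_dep /= => coassoc.
rewrite /conv; under eq_bigr => p _ do rewrite mulr_suml.
rewrite coassoc; apply: eq_bigr => p _; rewrite mulr_sumr.
by apply: eq_bigr => q _; rewrite mulrA.
Qed.

Lemma convC (f g : H -> H) :
  cocommutative D -> linear f -> linear g -> conv f g = conv g f.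
Proof.
move=> hcc hf hg; apply: functional_extensionality => x.
rewrite /conv (teq2_sum_mul hf hg (hcc x)) big_map.
by apply: eq_bigr => p _; rewrite mulrC.
Qed.

Lemma pi_linear n : linear (pi n).
Proof. exact: pi_lin hH n. Qed.

Lemma pi_in_deg n x : in_deg pi n (pi n x).
Proof. by rewrite /in_deg (pi_orth hH) eqxx. Qed.

Lemma pi_homog n m x : in_deg pi m x -> pi n x = if n == m then x else 0.
Proof. by move=> hx; rewrite -hx (pi_orth hH) hx. Qed.

Lemma pi_decomp_ge x : exists N, forall M, (N <= M)%N ->
  (forall n, (M <= n)%N -> pi n x = 0) /\ x = \sum_(n < M) pi n x.
Proof.
have [N [hv hx]] := pi_decomp hH x; exists N => M hNM; split.
  by move=> n hn; apply: hv; apply: leq_trans hn.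
rewrite {1}hx (big_ord_widen M (fun n => pi n x) hNM) big_mkcond /=.
apply: eq_bigr => i _; case: ifP => // /negbT; rewrite -leqNgt => hi.
by rewrite hv.
Qed.

Lemma eps_pi0 x : eps (pi 0 x) = eps x.
Proof.
have [N hN] := pi_decomp_ge x; have [_ hx] := hN N.+1 (leqnSn N).
rewrite {2}hx (lin_sum eps_scalar) big_ord_recl big1 ?addr0 // => i _.
exact: (eps_graded hH (n := i.+1)) (pi_in_deg _ _).
Qed.

(* The only place where connectedness is used. *)
Lemma pi0E : pi 0 = conv1.
Proof.
apply: functional_extensionality => x; apply: (connected_inj hH).
- exact: pi_in_deg.
- by rewrite /in_deg /conv1 (linZ (pi_linear 0)) (one_graded hH).
- by rewrite /conv1 (linZ eps_scalar) /= (eps_one hH) mulr1 eps_pi0.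
Qed.

Lemma pi_mul n x y :
  pi n (x * y) = \sum_(0 <= i < n.+1) pi i x * pi (n - i) y.
Proof.
have [Nx hNx] := pi_decomp_ge x; have [Ny hNy] := pi_decomp_ge y.
set M := maxn (maxn Nx Ny) n.+1.
have [_ hx] := hNx M (leq_trans (leq_maxl Nx Ny) (leq_maxl _ _)).
have [_ hy] := hNy M (leq_trans (leq_maxr Nx Ny) (leq_maxl _ _)).
have hnM : (n < M)%N by rewrite leq_max ltnSn orbT.
rewrite {1}hx {1}hy mulr_suml (lin_sum (pi_linear n)).
transitivity (\sum_(i < M) if (i <= n)%N then pi i x * pi (n - i) y else 0).
  apply: eq_bigr => i _; rewrite mulr_sumr (lin_sum (pi_linear n)).
  under eq_bigr => j _ do
    rewrite (pi_homog n (mul_graded hH (pi_in_deg i x) (pi_in_deg j y))).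
  case: leqP => hin.
    have hj : (n - i < M)%N by apply: leq_ltn_trans hnM; apply: leq_subr.
    rewrite (bigD1 (Ordinal hj)) //= subnKC // eqxx big1 ?addr0 // => j hj'.
    case: eqP => // hnij; case/eqP: hj'; apply: val_inj => /=.
    by rewrite hnij addKn.
  apply: big1 => j _; case: eqP => // hnij.
  by move: hin; rewrite hnij ltnNge leq_addr.
rewrite -big_mkcond -(big_ord_widen M (fun i => pi i x * pi (n - i) y) hnM).
by rewrite big_mkord.
Qed.

Fixpoint conv_pi (a : seq nat) : H -> H :=
  if a is n :: a' then conv (pi n) (conv_pi a') else conv1.

Lemma conv_pi_linear a : linear (conv_pi a).
Proof.
elim: a => [|n a IH] /=; first exact: conv1_linear.
exact: conv_linear (pi_linear n) IH.
Qed.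

Lemma xiE a : xi D eps pi a = conv_pi a.
Proof.
case: a => [|n a] //; elim: a n => [|m a IH] n; apply: functional_extensionality => h.
  by rewrite /= (convf1 (pi_linear n)) big_seq1 big_ord1.
rewrite /= -[conv (pi m) (conv_pi a)]/(conv_pi (m :: a)) -IH /conv big_allpairs_dep.
apply: eq_bigr => p _; rewrite /xi /= mulr_sumr; apply: eq_bigr => t _.
by rewrite big_ord_recl.
Qed.

Lemma conv_pi_cat a b : conv_pi (a ++ b) = conv (conv_pi a) (conv_pi b).
Proof.
elim: a => [|n a IH] /=; first by rewrite (conv1f (conv_pi_linear b)).
by rewrite IH (convA (pi_linear n) (conv_pi_linear a) (conv_pi_linear b)).
Qed.

Lemma conv_pi_homog e n h : in_deg pi n h -> sumn e != n -> conv_pi e h = 0.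
Proof.
elim: e n h => [|a e IH] n h hh hs /=.
  by rewrite /conv1 (eps_graded hH (n := n)) ?scale0r // lt0n eq_sym.
rewrite /conv (teq2_sum_mul (pi_linear a) (conv_pi_linear e) (D_graded hH hh)).
rewrite big_allpairs_dep big1_seq // => i /andP[_]; rewrite mem_iota add0n ltnS => hi.
apply: big1 => p _ /=; rewrite (pi_orth hH); case: eqP => [hai|_]; last by rewrite mul0r.
subst i; rewrite (IH (n - a)%N _ (pi_in_deg _ _)) ?mulr0 //.
by apply: contra hs => /eqP hse; rewrite /= hse subnKC.
Qed.

Lemma conv_pi_pi e n x : conv_pi e (pi n x) = if sumn e == n then conv_pi e x else 0.
Proof.
case: eqP => [hs|/eqP hs]; last exact: conv_pi_homog (pi_in_deg n x) hs.
have [N hN] := pi_decomp_ge x; have [_ hx] := hN (maxn N n.+1) (leq_maxl _ _).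
have hn : (n < maxn N n.+1)%N by rewrite leq_max ltnSn orbT.
rewrite {2}hx (lin_sum (conv_pi_linear e)) (bigD1 (Ordinal hn)) //= big1 ?addr0 // => i hi.
apply: conv_pi_homog; first exact: pi_in_deg.
by rewrite hs; apply: contra hi => /eqP hi; apply/eqP/val_inj.
Qed.

Lemma conv_pi_red a : conv_pi (red a) = conv_pi a.
Proof.
elim: a => [|n a IH] //; rewrite /red /= in IH *; case: eqP => [->|_] /=.
  by rewrite pi0E (conv1f (conv_pi_linear a)) IH.
by rewrite IH.
Qed.

Lemma conv_pi_sumn0 a : sumn a = 0%N -> conv_pi a = conv1.
Proof.
elim: a => [|x a IH] //= /eqP; rewrite addn_eq0 => /andP[/eqP -> /eqP /IH ->].
by rewrite pi0E (conv1f conv1_linear).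
Qed.

Lemma conv_pi1 a : conv_pi a 1 = if sumn a == 0%N then 1 else 0.
Proof.
case: eqP => [/conv_pi_sumn0 ->|/eqP hs]; first by rewrite /conv1 (eps_one hH) scale1r.
exact: conv_pi_homog (one_graded hH) hs.
Qed.

Lemma conv_pi_mul g x y :
  conv_pi g (x * y) = \sum_(e <- boxes g) conv_pi e x * conv_pi (subn_seq g e) y.
Proof.
elim: g x y => [|a g IH] x y.
  by rewrite /= big_seq1 /conv1 (eps_mul hH) -scalerAl mul1r scalerA mulrC.
rewrite boxes_cons big_allpairs_dep.
transitivity (\sum_(0 <= i < a.+1) \sum_(t <- boxes g) \sum_(p <- D x) \sum_(q <- D y)
   (pi i p.1 * conv_pi t p.2) * (pi (a - i) q.1 * conv_pi (subn_seq g t) q.2)); last first.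
  by apply: eq_bigr => i _; apply: eq_bigr => t _; rewrite -big_distrlr.
rewrite /= /conv (teq2_sum_mul (pi_linear a) (conv_pi_linear g) (D_mul hH x y)).
rewrite big_allpairs_dep.
transitivity (\sum_(p <- D x) \sum_(q <- D y) \sum_(0 <= i < a.+1) \sum_(t <- boxes g)
   (pi i p.1 * conv_pi t p.2) * (pi (a - i) q.1 * conv_pi (subn_seq g t) q.2)).
  apply: eq_bigr => p _; apply: eq_bigr => q _.
  rewrite /= pi_mul IH mulr_suml; apply: eq_bigr => i _.
  by rewrite mulr_sumr; apply: eq_bigr => t _; rewrite mulrACA.
exact: exchange_big2.
Qed.

Lemma conv_pi_conv_pi c a h :
  conv_pi a (conv_pi c h) =
  \sum_(A <- mats c (size a) | (rowsums A == c) && (colsums A (size a) == a))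
     conv_pi (readm A) h.
Proof.
elim: c a h => [|c0 c IH] a h.
  rewrite big_cons big_nil /= colsums_nil /conv1 (linZ (conv_pi_linear a)) conv_pi1.
  by case: eqP => _; rewrite /= ?scaler0 ?addr0.
rewrite (big_mats_cons (fun A => conv_pi (readm A) h)).
rewrite -[conv_pi (c0 :: c)]/(conv (pi c0) (conv_pi c)) /conv (lin_sum (conv_pi_linear a)).
transitivity (\sum_(e <- boxes a) \sum_(p <- D h)
                 conv_pi e (pi c0 p.1) * conv_pi (subn_seq a e) (conv_pi c p.2)).
  by rewrite exchange_big; apply: eq_bigr => p _; rewrite conv_pi_mul.
rewrite [RHS]big_mkcond; apply: eq_big_seq => e /size_mem_boxes hse.
under eq_bigr => p _ do rewrite conv_pi_pi.
case: eqP => _; last by rewrite big1 // => p _; rewrite mul0r.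
under eq_bigr => p _ do rewrite IH size_subn_seq // mulr_sumr.
rewrite exchange_big; apply: eq_bigr => t _.
by rewrite [readm _]/= conv_pi_cat.
Qed.

Lemma conv_pi_seq1 n : conv_pi [:: n] = pi n.
Proof. exact: convf1 (pi_linear n). Qed.

Lemma conv_pi_bound h : exists N, forall a, conv_pi a h != 0 -> (sumn a < N)%N.
Proof.
have [N hN] := pi_decomp_ge h; have [_ hh] := hN N (leqnn N); exists N => a.
apply: contraR; rewrite -leqNgt => ha; apply/eqP.
rewrite hh (lin_sum (conv_pi_linear a)); apply: big1 => i _; rewrite conv_pi_pi.
by case: eqP => // hai; move: (ltn_ord i); rewrite -hai ltnNge ha.
Qed.

Section Cocommutative.
Hypothesis hcc : cocommutative D.

Lemma conv_pi_rem x t : x \in t -> conv_pi t = conv_pi (x :: rem x t).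
Proof.
elim: t => [|y t IH] //= hx; have [<-|hyx] := eqVneq y x; first by [].
rewrite /= IH; last by move: hx; rewrite in_cons eq_sym (negbTE hyx).
rewrite /= -(convA (pi_linear y) (pi_linear x) (conv_pi_linear _)).
rewrite (convC hcc (pi_linear y) (pi_linear x)).
by rewrite (convA (pi_linear x) (pi_linear y) (conv_pi_linear _)).
Qed.

Lemma conv_pi_perm s t : perm_eq s t -> conv_pi s = conv_pi t.
Proof.
elim: s t => [|x s IH] t hst; first by move: hst; rewrite perm_sym => /perm_nilP ->.
have hx : x \in t by rewrite -(perm_mem hst) mem_head.
rewrite (conv_pi_rem hx) /= (IH (rem x t)) //.
by rewrite -(perm_cons x) (perm_trans hst) // perm_to_rem.
Qed.

End Cocommutative.

Local Notation beta := (betaH D eps pi).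

Lemma betaE h a : is_comp a -> beta h a = conv_pi a h.
Proof. by move=> ha; rewrite /betaH ha xiE. Qed.

Lemma beta_nocomp h a : ~~ is_comp a -> beta h a = 0.
Proof. by move=> ha; rewrite /betaH (negbTE ha). Qed.

Lemma beta_red h e : beta h (red e) = conv_pi e h.
Proof. by rewrite betaE ?is_comp_red // conv_pi_red. Qed.

Lemma beta_finite_support h : exists s, HQ_supp (beta h) s.
Proof.
have [N hN] := conv_pi_bound h; exists (bounded_seqs N N) => a ha hb.
by apply: comp_mem_bounded_seqs => //; apply: hN; rewrite -betaE.
Qed.

Lemma beta_linear a x y alpha :
  beta (a *: x + y) alpha = a *: beta x alpha + beta y alpha.
Proof.
have [hal|hal] := boolP (is_comp alpha); first by rewrite !betaE // conv_pi_linear.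
by rewrite !beta_nocomp // scaler0 addr0.
Qed.

Lemma beta_mul x y gamma : is_comp gamma ->
  beta (x * y) gamma = HQ_mul (beta x) (beta y) gamma.
Proof.
by move=> hg; rewrite betaE // conv_pi_mul; apply: eq_bigr => e _; rewrite !beta_red.
Qed.

Lemma beta_one gamma : is_comp gamma -> beta 1 gamma = HQ_one H gamma.
Proof. by move=> hg; rewrite betaE // conv_pi1 /HQ_one is_comp_sumn_eq0. Qed.

Lemma beta_comul s a b : is_comp a -> is_comp b ->
  HQ_Delta (fsharp beta s) a b = fsharp2 beta (DeltaHH D s) a b.
Proof.
move=> ha hb; rewrite /HQ_Delta /fsharp /fsharp2 big_allpairs_dep.
apply: eq_bigr => p _; rewrite betaE; last by rewrite /is_comp all_cat; apply/andP.
rewrite conv_pi_cat /conv mulr_sumr.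
by apply: eq_bigr => q _; rewrite !betaE // mulrA.
Qed.

Lemma beta_counit s : HQ_eps (fsharp beta s) = \sum_(p <- s) eps p.2 *: p.1.
Proof. by apply: eq_bigr => p _; rewrite /betaH /= -scalerAr mulr1. Qed.

Lemma beta_homog n h alpha : in_deg pi n h -> is_comp alpha -> sumn alpha <> n ->
  beta h alpha = 0.
Proof. by move=> hh hal /eqP hs; rewrite betaE // (conv_pi_homog hh hs). Qed.

Lemma beta_nil h : beta h [::] = pi 0 h.
Proof. by rewrite betaE // pi0E. Qed.

Lemma beta_seq1 n h : (0 < n)%N -> beta h [:: n] = pi n h.
Proof. by move=> hn; rewrite betaE ?conv_pi_seq1 // /is_comp /= hn. Qed.

(* [comp01] enumerates the compositions of length at most one, the only ones on
   which [epsP_M] does not vanish. *)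
Definition comp01 (n : nat) : seq nat := if n is 0 then [::] else [:: n].

Lemma beta_comp01 h n : epsP_M k (comp01 n) *: beta h (comp01 n) = pi n h.
Proof. by case: n => [|n]; rewrite scale1r ?beta_nil ?beta_seq1. Qed.

Lemma beta_epsP h s : uniq s -> HQ_supp (beta h) s ->
  \sum_(alpha <- s) epsP_M k alpha *: beta h alpha = h.
Proof.
move=> us hs; have [N hN] := pi_decomp_ge h; have [hv hh] := hN N (leqnn N).
pose t := map comp01 (iota 0 N).
have t_uniq : uniq t.
  by rewrite map_inj_uniq ?iota_uniq // => [[|m] [|n]] //= [->].
have supp alpha : epsP_M k alpha *: beta h alpha != 0 -> (alpha \in s) && (alpha \in t).
  have [hal|/beta_nocomp->] := boolP (is_comp alpha); last by rewrite scaler0 eqxx.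
  rewrite /epsP_M; case: ifP => hsz; last by rewrite scale0r eqxx.
  rewrite scale1r => hb; rewrite hs //=; apply/mapP.
  case: alpha hal hsz hb => [|m [|//]] // hal _ hb.
    exists 0%N => //; rewrite mem_iota ltnNge.
    by apply: contra hb => hN0; rewrite beta_nil hv.
  have hm : (0 < m)%N by move: hal; rewrite /is_comp /= andbT.
  exists m; last by case: m hm {hb hal}.
  by rewrite mem_iota ltnNge; apply: contra hb => hNm; rewrite beta_seq1 // hv.
rewrite (perm_big_supp (s := t)); last first.
  apply: uniq_perm; rewrite ?filter_uniq // => alpha; rewrite !mem_filter.
  by case: eqP => //= /eqP /supp /andP[-> ->].
rewrite big_map [RHS]hh -(big_mkord xpredT (fun n => pi n h)).
by rewrite /index_iota subn0; apply: eq_bigr => n _; rewrite beta_comp01.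
Qed.

Lemma beta_coassoc h a c : is_comp a -> is_comp c ->
  beta (beta h c) a = HQ_DeltaP' (beta h) a c.
Proof.
move=> ha hc; rewrite !betaE // conv_pi_conv_pi /HQ_DeltaP'.
apply: eq_big => [A|A _]; last by rewrite beta_red.
rewrite /reduced; case: eqP => [->|] //=; case: eqP => [->|] //=.
by move: ha hc; rewrite /is_comp => -> ->.
Qed.

Lemma beta_symmetric : cocommutative D -> forall h, in_HLambda (beta h).
Proof.
move=> hcc h; exists (fun l => conv_pi l h) => alpha hal.
by rewrite betaE // (conv_pi_perm hcc (permEl (perm_sort geq alpha))).
Qed.

End ConvolutionAlgebra.

Unset Implicit Arguments.

Theorem theorem5p7 (k : comPzRingType) (H : comAlgType k)
  (D : H -> seq (H * H)) (eps : H -> k) (S : H -> H) (pi : nat -> H -> H) :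
  graded_connected_Hopf D eps S pi ->
  let beta := betaH D eps pi in
  [/\ (* beta_H is well defined: the sum is finite *)
      (forall h, exists s, HQ_supp (beta h) s),
      (* (a) k-algebra homomorphism and graded (k,H)-coalgebra homomorphism *)
      [/\ (forall (a : k) x y alpha, beta (a *: x + y) alpha = a *: beta x alpha + beta y alpha),
          (forall x y gamma, is_comp gamma -> beta (x * y) gamma = HQ_mul (beta x) (beta y) gamma),
          (forall gamma, is_comp gamma -> beta 1 gamma = HQ_one H gamma),
          (forall s a b, is_comp a -> is_comp b ->
              HQ_Delta (fsharp beta s) a b = fsharp2 beta (DeltaHH D s) a b) &
          (forall s, HQ_eps (fsharp beta s) = \sum_(p <- s) eps p.2 *: p.1) /\
          (forall n h alpha, in_deg pi n h -> is_comp alpha -> sumn alpha <> n ->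
              beta h alpha = 0)],
      (* (b) (id (x) eps_P) o beta_H = id_H *)
      (forall h s, uniq s -> HQ_supp (beta h) s ->
          \sum_(alpha <- s) epsP_M k alpha *: beta h alpha = h),
      (* (c) (beta_H (x) id) o beta_H = (id (x) Delta'_P) o beta_H *)
      (forall h a c, is_comp a -> is_comp c ->
          beta (beta h c) a = HQ_DeltaP' (beta h) a c) &
      (* (d) cocommutative => beta_H(H) in H (x) Lambda *)
      (cocommutative D -> forall h, in_HLambda (beta h))].
Proof.
move=> hH beta; split.
- exact: beta_finite_support hH.
- split; [exact: beta_linear hH | exact: beta_mul hH | exact: beta_one hH
         | exact: beta_comul hH | split; [exact: beta_counit | exact: beta_homog hH]].
- exact: beta_epsP hH.
- exact: beta_coassoc hH.
- exact: beta_symmetric hH.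
Qed.
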